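(* Let $\bar A=\{A_i\}$ be a partition with $A_j\in(P_j,Q_j)$ for all $j$, and let $x\in(P_i,Q_i)$. Then it is impossible to have simultaneously $T_ix\in[A_{\rho(i)+1},Q_{\rho(i)+1})$ and $T_{i-1}x\in(P_{\theta(i-1)},A_{\theta(i-1)}]$.
   Context: Setting. Fix $g\ge 2$; indices are mod $8g-4$. Let $\mathcal F$ be the regular hyperbolic $(8g-4)$-gon in the unit disk centered at $0$ with all interior angles $\pi/2$, sides labeled $1,\dots,8g-4$ counterclockwise, side $i$ joining vertices $V_i$ and $V_{i+1}$. The complete geodesic extending side $i$ goes from $P_i$ (beyond $V_i$) to $Q_{i+1}$ (beyond $V_{i+1}$) on the unit circle; counterclockwise order $P_1,Q_1,P_2,Q_2,\dots,P_{8g-4},Q_{8g-4}$. $\sigma(i)=4g-i$ ($i$ odd), $\sigma(i)=2-i$ ($i$ even), $\rho(i)=\sigma(i)+1$, $\theta(i)=\sigma(i)-1$. $T_i$ is the Möbius transformation mapping side $i$ onto side $\sigma(i)$, with isometric circle the geodesic $P_iQ_{i+1}$, mapped onto the geodesic $Q_{\sigma(i)+1}P_{\sigma(i)}$, inside to outside. Arcs $[A,B)$, $(A,B]$, $(A,B)$ are counterclockwise from $A$ to $B$. *)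

From Stdlib Require Import Reals ZArith.
From Coquelicot Require Import Coquelicot.
Open Scope R_scope.

(* Number of sides N = 8g-4, as an integer and as a real. *)
Definition NZ (g : nat) : Z := (8 * Z.of_nat g - 4)%Z.
Definition Nr (g : nat) : R := IZR (NZ g).

(* Side pairing maps on indices (integers; everything below is
   (8g-4)-periodic in the index, so indices are effectively mod 8g-4). *)
Definition sigma (g : nat) (i : Z) : Z :=
  if Z.odd i then (4 * Z.of_nat g - i)%Z else (2 - i)%Z.
Definition rho (g : nat) (i : Z) : Z := (sigma g i + 1)%Z.
Definition theta (g : nat) (i : Z) : Z := (sigma g i - 1)%Z.

Definition cis (t : R) : C := (cos t, sin t).

(* Geometry of the regular (8g-4)-gon F with all angles pi/2 centered at 0.
   Convention (rotation normalization): vertex V_i is at argument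
   2*pi*(i-1)/N, so side i (from V_i to V_{i+1}) has its midpoint on the ray
   of argument phi i = 2*pi*(i - 1/2)/N.  The complete geodesic through side i
   is the circle orthogonal to the unit circle, symmetric about that ray,
   with endpoints at arguments phi i -/+ beta, where
   sin beta = sqrt 2 * sin (pi/N) (this is exactly the condition that the
   geodesics through consecutive sides meet at right angles). *)
Definition phi (g : nat) (i : Z) : R := 2 * PI / Nr g * (IZR i - 1/2).
Definition beta (g : nat) : R := asin (sqrt 2 * sin (PI / Nr g)).

(* Endpoints: geodesic of side i goes from P_i (beyond V_i) to
   Q_{i+1} (beyond V_{i+1}). *)
Definition P (g : nat) (i : Z) : C := cis (phi g i - beta g).
Definition Q (g : nat) (i : Z) : C := cis (phi g (i - 1) + beta g).

(* Let k = cos beta.  The hyperbolic translation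
   M z = (z - k)/(1 - k z) along the real diameter maps the geodesic with
   endpoints e^{-/+ i beta} (isometric circle centered on the positive real
   axis) onto the geodesic with endpoints e^{i(pi +/- beta)}, inside to
   outside, with e^{-i beta} |-> e^{i(pi+beta)}.  Conjugating by rotations,
   T_i z = e^{i(phi(sigma i) - pi)} * M (e^{-i phi i} z)
   is the Moebius transformation of the disk with isometric circle the
   geodesic P_i Q_{i+1}, mapped onto the geodesic Q_{sigma i+1} P_{sigma i}
   (P_i |-> Q_{sigma i + 1}, Q_{i+1} |-> P_{sigma i}), inside to outside;
   it maps side i onto side sigma i. *)
Definition Mtrans (k : R) (z : C) : C :=
  ((z - RtoC k) / (RtoC 1 - RtoC k * z))%C.
Definition T (g : nat) (i : Z) (z : C) : C :=
  (cis (phi g (sigma g i) - PI) *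
   Mtrans (cos (beta g)) (cis (- phi g i) * z))%C.

Definition arc_oo (A B z : C) : Prop :=
  exists s t, 0 < s < 2 * PI /\ B = (A * cis s)%C /\
              0 < t < s /\ z = (A * cis t)%C.
Definition arc_co (A B z : C) : Prop :=
  exists s t, 0 < s < 2 * PI /\ B = (A * cis s)%C /\
              0 <= t < s /\ z = (A * cis t)%C.
Definition arc_oc (A B z : C) : Prop :=
  exists s t, 0 < s < 2 * PI /\ B = (A * cis s)%C /\
              0 < t <= s /\ z = (A * cis t)%C.

From Pilot Require Import Defs.
From Stdlib Require Import Reals ZArith Lra Lia Psatz.
From Coquelicot Require Import Coquelicot.
Open Scope R_scope.

(* Write x = cis (phi_i + u).  Up to rotations, T_i and T_(i-1) are the
   translation M z = (z - k) / (1 - k z), k = cos beta, and for a point cis u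
   the sign of sin (arg M (cis u) - a) is that of an explicit trigonometric
   polynomial in u.  The condition on T_i x makes it negative at u for
   a = 4h - beta (h = pi/N), the condition on T_(i-1) x makes it positive at
   u + 2h for -a.  At the midpoint m = u + h the difference of the two is
   4 cos m (cos^3 h sin a + sin^3 h cos a) - 4 k sin a, which is <= 0 by an
   algebraic inequality in sin h valid for h <= 1/3, i.e. for N >= 12. *)

Lemma cis_add a b : cis (a + b) = (cis a * cis b)%C.
Proof. unfold cis, Cmult; simpl. rewrite cos_plus, sin_plus. f_equal; ring. Qed.

Lemma cis_mul_cancel_l a b w : (cis a * w)%C = cis b -> w = cis (b - a).
Proof.
  destruct w as [w1 w2]. unfold cis, Cmult; simpl. intros H. injection H as H1 H2.
  pose proof (sin2_cos2 a) as E. unfold Rsqr in E.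
  rewrite cos_minus, sin_minus, <- H1, <- H2. f_equal.
  - transitivity (w1 * (sin a * sin a + cos a * cos a)); [rewrite E|]; ring.
  - transitivity (w2 * (sin a * sin a + cos a * cos a)); [rewrite E|]; ring.
Qed.

Lemma cos_eq_1_small t : -2 * PI < t < 2 * PI -> cos t = 1 -> t = 0.
Proof.
  intros Ht Hc.
  assert (Hs : sin (t / 2) = 0).
  { pose proof (cos_2a_sin (t / 2)) as E. replace (2 * (t / 2)) with t in E by field. nra. }
  destruct (sin_eq_0_0 _ Hs) as [n Hn]. pose proof PI_RGT_0.
  assert (Hn1 : -1 < IZR n < 1) by (split; apply (Rmult_lt_reg_r PI); lra).
  destruct Hn1 as [L U]. apply lt_IZR in L. apply lt_IZR in U.
  replace n with 0%Z in Hn by lia. lra.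
Qed.

Lemma cis_turn_unique p s s0 : 0 < s < 2 * PI -> 0 < s0 < 2 * PI ->
  cis (p + s0) = (cis p * cis s)%C -> s = s0.
Proof.
  intros Hs Hs0 H. symmetry in H. apply cis_mul_cancel_l in H.
  replace (p + s0 - p) with s0 in H by ring. unfold cis in H. injection H as Hc Hsn.
  assert (s - s0 = 0); [|lra].
  apply cos_eq_1_small; [lra|]. rewrite cos_minus, Hc, Hsn.
  pose proof (sin2_cos2 s0) as E. unfold Rsqr in E. lra.
Qed.

Lemma arc_oo_cis p s0 z : 0 < s0 < 2 * PI -> arc_oo (cis p) (cis (p + s0)) z ->
  exists t, 0 < t < s0 /\ z = cis (p + t).
Proof.
  intros Hs0 (s & t & Hs & HB & Ht & ->).
  apply cis_turn_unique in HB; [subst s|lra|lra].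
  exists t. split; [lra|]. now rewrite cis_add.
Qed.

Lemma arc_co_cis p s0 z : 0 < s0 < 2 * PI -> arc_co (cis p) (cis (p + s0)) z ->
  exists t, 0 <= t < s0 /\ z = cis (p + t).
Proof.
  intros Hs0 (s & t & Hs & HB & Ht & ->).
  apply cis_turn_unique in HB; [subst s|lra|lra].
  exists t. split; [lra|]. now rewrite cis_add.
Qed.

Lemma arc_oc_cis p s0 z : 0 < s0 < 2 * PI -> arc_oc (cis p) (cis (p + s0)) z ->
  exists t, 0 < t <= s0 /\ z = cis (p + t).
Proof.
  intros Hs0 (s & t & Hs & HB & Ht & ->).
  apply cis_turn_unique in HB; [subst s|lra|lra].
  exists t. split; [lra|]. now rewrite cis_add.
Qed.

Definition Mden (k u : R) : R := (1 - k * cos u) ^ 2 + (k * sin u) ^ 2.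

Lemma Mden_pos k u : 0 <= k < 1 -> 0 < Mden k u.
Proof.
  intros Hk. pose proof (sin2_cos2 u) as E. unfold Rsqr in E. pose proof (COS_bound u).
  unfold Mden. nra.
Qed.

Definition Mtrans_sin_sub (k u a : R) : R :=
  (1 - k ^ 2) * sin u * cos a - ((1 + k ^ 2) * cos u - 2 * k) * sin a.

Lemma Mtrans_cis_sin_sub k u psi a : 0 <= k < 1 -> Mtrans k (cis u) = cis psi ->
  sin (psi - a) * Mden k u = Mtrans_sin_sub k u a.
Proof.
  intros Hk H. pose proof (Mden_pos k u Hk) as HD.
  unfold Mtrans, cis, Cdiv, Cminus, Cmult, Cinv, Copp, Cplus, RtoC in H. cbn [fst snd] in H.
  injection H as Hc Hs.
  match type of Hc with context [_ / ?d] =>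
    replace d with (Mden k u) in Hc, Hs by (unfold Mden; ring) end.
  assert (Hc' : cos psi * Mden k u = (1 + k ^ 2) * cos u - 2 * k).
  { rewrite <- Hc. field_simplify; [|lra]. pose proof (sin2_cos2 u) as E. unfold Rsqr in E. nra. }
  assert (Hs' : sin psi * Mden k u = (1 - k ^ 2) * sin u).
  { rewrite <- Hs. field_simplify; [|lra]. ring. }
  unfold Mtrans_sin_sub. rewrite sin_minus, <- Hc', <- Hs'. ring.
Qed.

Lemma Mtrans_sin_sub_shift_diff k h m a : k ^ 2 = 1 - 2 * sin h ^ 2 ->
  Mtrans_sin_sub k (m + h) (- a) - Mtrans_sin_sub k (m - h) a =
  4 * cos m * (cos h ^ 3 * sin a + sin h ^ 3 * cos a) - 4 * k * sin a.
Proof.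
  intros Hk. unfold Mtrans_sin_sub.
  rewrite cos_neg, sin_neg, cos_plus, sin_plus, cos_minus, sin_minus.
  replace (1 - k ^ 2) with (2 * sin h ^ 2) by lra.
  replace (1 + k ^ 2) with (2 * cos h ^ 2)
    by (pose proof (sin2_cos2 h) as E; unfold Rsqr in E; nra).
  ring.
Qed.

(* The chords are sharp enough that [key_poly_ineq] still holds at t = 1/9,
   where its margin is smallest. *)
Lemma sqrt_chord_bounds (t c k q : R) :
  0 < t <= 1/9 -> 0 < c -> c^2 = 1 - t -> 0 < k -> k^2 = 1 - 2*t -> 0 < q -> q^2 = 2 ->
  1 - 53/100*t <= c <= 1 - t/2 /\ 1 - 11/10*t <= k <= 1 - t /\
  14142/10000 <= q <= 14143/10000.
Proof.
  intros Ht Hc Hc2 Hk Hk2 Hq Hq2.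
  assert (sq : forall x y, 0 <= y -> x^2 <= y^2 -> x <= y)
    by (intros x y Hy Hxy; apply Rsqr_incr_0_var; unfold Rsqr; lra).
  repeat split; apply sq; nra.
Qed.

Lemma key_poly_ineq (t : R) : 0 <= t <= 1/9 ->
  let e := 1 - 8*t + 8*t^2 in
  ((1 - t) + (1 - t/2)^3) * (e*(1 - t) + 4*t*(1 - t/2)*(1 - 2*t)*(14143/10000)) <=
  (1 - 3*t + t^2) * (4*(1 - 53/100*t)*(1 - 11/10*t)^3 - e*(14143/10000)).
Proof. intros Ht e; unfold e; nra. Qed.

Lemma key_alg_ineq (t c k q : R) :
  0 < t <= 1/9 -> k^2 = 1 - 2*t ->
  1 - 53/100*t <= c <= 1 - t/2 -> 1 - 11/10*t <= k <= 1 - t ->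
  14142/10000 <= q <= 14143/10000 ->
  let e := 1 - 8*t + 8*t^2 in
  (k + c^3) * (e*k + 4*t*c*k^2*q) <= (1 - 3*t + t^2) * (4*c*k^3 - e*q).
Proof.
  intros Ht Hk2 Hc Hk Hq e.
  assert (He : 0 <= e) by (unfold e; nra).
  assert (Hc3 : (1 - 53/100*t)^3 <= c^3 <= (1 - t/2)^3) by (split; apply pow_incr; lra).
  assert (Hk3 : (1 - 11/10*t)^3 <= k^3) by (apply pow_incr; lra).
  assert (Hlow : 4*(1 - 53/100*t)*(1 - 11/10*t)^3 - e*(14143/10000) <= 4*c*k^3 - e*q).
  { assert ((1 - 53/100*t)*(1 - 11/10*t)^3 <= c*k^3)
      by (apply Rmult_le_compat; try lra; apply pow_le; lra).
    assert (e*q <= e*(14143/10000)) by (apply Rmult_le_compat_l; lra).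
    lra. }
  assert (Hup : (k + c^3) * (e*k + 4*t*c*k^2*q) <=
                ((1 - t) + (1 - t/2)^3) * (e*(1 - t) + 4*t*(1 - t/2)*(1 - 2*t)*(14143/10000))).
  { rewrite Hk2.
    assert (0 <= c^3) by (apply pow_le; lra).
    assert (e*k <= e*(1 - t)) by (apply Rmult_le_compat_l; lra).
    assert (t*c*(1 - 2*t)*q <= t*(1 - t/2)*(1 - 2*t)*(14143/10000))
      by (repeat apply Rmult_le_compat; try lra; repeat apply Rmult_le_pos; lra).
    apply Rmult_le_compat; try lra.
    assert (0 <= e*k) by (apply Rmult_le_pos; lra).
    assert (0 <= t*c*(1 - 2*t)*q) by (repeat apply Rmult_le_pos; lra).
    lra. }
  pose proof (key_poly_ineq t ltac:(lra)) as Hpoly.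
  assert (0 < 1 - 3*t + t^2) by nra.
  assert ((1 - 3*t + t^2) * (4*(1 - 53/100*t)*(1 - 11/10*t)^3 - e*(14143/10000)) <=
          (1 - 3*t + t^2) * (4*c*k^3 - e*q)) by (apply Rmult_le_compat_l; lra).
  fold e in Hpoly. lra.
Qed.

Lemma sqrt2_sqr : sqrt 2 ^ 2 = 2.
Proof. rewrite pow2_sqrt; lra. Qed.

Section Beta.

Variables h b : R.
Hypothesis h_bounds : 0 < h <= 1/3.
Hypothesis b_def : b = asin (sqrt 2 * sin h).

Lemma sin_h_pos : 0 < sin h.
Proof. apply sin_gt_0; pose proof PI2_3_2; lra. Qed.

Lemma sqrt2_sin_bounds : 0 < sqrt 2 * sin h < 1.
Proof.
  pose proof (sin_lt_x h ltac:(lra)). pose proof sin_h_pos.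
  pose proof Rlt_sqrt2_0. pose proof sqrt2_sqr. nra.
Qed.

Lemma sin_beta_eq : sin b = sqrt 2 * sin h.
Proof. rewrite b_def; apply sin_asin; pose proof sqrt2_sin_bounds; lra. Qed.

Lemma cos_beta_pos : 0 < cos b.
Proof.
  rewrite b_def, cos_asin by (pose proof sqrt2_sin_bounds; lra).
  apply sqrt_lt_R0. pose proof sqrt2_sin_bounds. unfold Rsqr. nra.
Qed.

Lemma cos_beta_sqr : cos b ^ 2 = 1 - 2 * sin h ^ 2.
Proof.
  pose proof (sin2_cos2 b) as E. rewrite sin_beta_eq in E. unfold Rsqr in E.
  pose proof sqrt2_sqr. nra.
Qed.

Lemma h_lt_beta : h < b.
Proof.
  pose proof (asin_bound (sqrt 2 * sin h)). rewrite <- b_def in H.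
  destruct (Rlt_or_le h b) as [|Hle]; [assumption|].
  pose proof PI2_3_2.
  pose proof (sin_incr_1 b h ltac:(lra) ltac:(lra) ltac:(lra) ltac:(lra) Hle) as Hsin.
  rewrite sin_beta_eq in Hsin. pose proof sin_h_pos. pose proof Rlt_sqrt2_0.
  pose proof sqrt2_sqr. nra.
Qed.

Lemma beta_le_PI2 : b <= PI / 2.
Proof. rewrite b_def; apply asin_bound. Qed.

Lemma sin_4h_sub_beta :
  sin (4 * h - b) =
  sin h * (4 * cos h * cos b ^ 3 - (1 - 8 * sin h ^ 2 * cos h ^ 2) * sqrt 2).
Proof.
  replace (4 * h) with (2 * (2 * h)) by ring.
  rewrite sin_minus, cos_2a_sin, !sin_2a, cos_2a_sin, sin_beta_eq.
  replace (cos b ^ 3) with (cos b * cos b ^ 2) by ring. rewrite cos_beta_sqr. ring.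
Qed.

Lemma cos_4h_sub_beta :
  cos (4 * h - b) =
  (1 - 8 * sin h ^ 2 * cos h ^ 2) * cos b + 4 * sin h ^ 2 * cos h * cos b ^ 2 * sqrt 2.
Proof.
  replace (4 * h) with (2 * (2 * h)) by ring.
  rewrite cos_minus, cos_2a_sin, !sin_2a, cos_2a_sin, sin_beta_eq, cos_beta_sqr. ring.
Qed.

Lemma key_trig_ineq :
  0 <= cos h ^ 3 * sin (4 * h - b) + sin h ^ 3 * cos (4 * h - b) <= cos b * sin (4 * h - b).
Proof.
  rewrite sin_4h_sub_beta, cos_4h_sub_beta.
  pose proof sin_h_pos as Hs. pose proof cos_beta_pos as Hk. pose proof cos_beta_sqr as Hk2.
  pose proof Rlt_sqrt2_0 as Hq. pose proof sqrt2_sqr as Hq2.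
  assert (Hc : 0 < cos h) by (apply cos_gt_0; pose proof PI2_3_2; lra).
  assert (Hc2 : cos h ^ 2 = 1 - sin h ^ 2) by (pose proof (sin2_cos2 h); unfold Rsqr in *; lra).
  pose proof (sin_lt_x h ltac:(lra)).
  set (s := sin h) in *. set (c := cos h) in *. set (k := cos b) in *. set (q := sqrt 2) in *.
  set (t := s ^ 2) in *.
  assert (Ht : 0 < t <= 1/9).
  { assert (s <= 1/3) by lra. unfold t. split; nra. }
  destruct (sqrt_chord_bounds t c k q Ht Hc Hc2 Hk Hk2 Hq Hq2) as (Hcb & Hkb & Hqb).
  pose proof (key_alg_ineq t c k q Ht Hk2 Hcb Hkb Hqb) as Hcore. cbv zeta in Hcore.
  replace (1 - 8 * t * c ^ 2) with (1 - 8 * t + 8 * t ^ 2) by (rewrite Hc2; ring).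
  set (e := 1 - 8 * t + 8 * t ^ 2) in *.
  set (sA := 4 * c * k ^ 3 - e * q) in *. set (cA := e * k + 4 * t * c * k ^ 2 * q) in *.
  assert (Hpoly : 0 < 1 - 3 * t + t ^ 2) by nra.
  assert (HcA : 0 <= cA).
  { assert (0 <= e) by (unfold e; nra).
    unfold cA; apply Rplus_le_le_0_compat; [apply Rmult_le_pos|]; try lra.
    repeat apply Rmult_le_pos; try apply pow_le; lra. }
  assert (Hc3 : 0 < c ^ 3) by (apply pow_lt; lra).
  assert (HsA : 0 <= sA).
  { apply (Rmult_le_reg_l (1 - 3 * t + t ^ 2)); [lra|]. nra. }
  assert (Hgap : 0 <= (k - c ^ 3) * sA - t * cA).
  { assert (Hk6 : k ^ 2 - c ^ 6 = t * (1 - 3 * t + t ^ 2))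
      by (replace (c ^ 6) with ((c ^ 2) ^ 3) by ring; rewrite Hc2, Hk2; ring).
    apply (Rmult_le_reg_l (k + c ^ 3)); [lra|].
    replace ((k + c ^ 3) * ((k - c ^ 3) * sA - t * cA))
      with ((k ^ 2 - c ^ 6) * sA - t * ((k + c ^ 3) * cA)) by ring.
    assert (0 <= t * ((1 - 3 * t + t ^ 2) * sA - (k + c ^ 3) * cA))
      by (apply Rmult_le_pos; lra).
    rewrite Hk6. lra. }
  replace (s ^ 3) with (s * t) by (unfold t; ring).
  split.
  - apply Rplus_le_le_0_compat; repeat apply Rmult_le_pos; lra.
  - apply Rmult_le_pos with (r1 := s) in Hgap; [|lra]. nra.
Qed.

Lemma Mtrans_sin_sub_step_le m :
  Mtrans_sin_sub (cos b) (m + h) (- (4 * h - b)) <= Mtrans_sin_sub (cos b) (m - h) (4 * h - b).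
Proof.
  pose proof (Mtrans_sin_sub_shift_diff (cos b) h m (4 * h - b) cos_beta_sqr) as E.
  pose proof key_trig_ineq as [X0 X1]. pose proof (COS_bound m) as [_ Hm].
  assert (cos m * (cos h ^ 3 * sin (4 * h - b) + sin h ^ 3 * cos (4 * h - b))
          <= cos h ^ 3 * sin (4 * h - b) + sin h ^ 3 * cos (4 * h - b)) by nra.
  lra.
Qed.

End Beta.

Lemma phi_add g j n : Defs.phi g (j + n) = Defs.phi g j + 2 * IZR n * (PI / Nr g).
Proof. unfold Defs.phi, Rdiv. rewrite plus_IZR. ring. Qed.

Lemma phi_sub g j n : Defs.phi g (j - n) = Defs.phi g j - 2 * IZR n * (PI / Nr g).
Proof. unfold Defs.phi, Rdiv. rewrite minus_IZR. ring. Qed.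

Lemma Q_cis g j : Q g j = cis (Defs.phi g j - beta g + (2 * beta g - 2 * (PI / Nr g))).
Proof. unfold Q. f_equal. rewrite phi_sub. ring. Qed.

Lemma T_cis g j u :
  T g j (cis (Defs.phi g j + u)) =
  (cis (Defs.phi g (Defs.sigma g j) - PI) * Mtrans (cos (beta g)) (cis u))%C.
Proof. unfold T. do 3 f_equal. rewrite <- cis_add. f_equal. ring. Qed.

Lemma T_cis_sin_sub g j u t a : 0 <= cos (beta g) < 1 ->
  T g j (cis (Defs.phi g j + u)) = cis (Defs.phi g (Defs.sigma g j) + t) ->
  sin (t + PI - a) * Mden (cos (beta g)) u = Mtrans_sin_sub (cos (beta g)) u a.
Proof.
  intros Hk H. rewrite T_cis in H. apply cis_mul_cancel_l, (Mtrans_cis_sin_sub _ _ _ a) in H;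
    [|exact Hk].
  rewrite <- H. do 2 f_equal. ring.
Qed.

Section Polygon.

Variable g : nat.
Hypothesis g_ge_2 : (2 <= g)%nat.

Local Notation h := (PI / Nr g).
Local Notation side_arc := (2 * beta g - 2 * (PI / Nr g)).

Lemma half_step_bounds : 0 < h <= 1/3.
Proof.
  assert (HN : 12 <= Nr g) by (unfold Nr, NZ; apply IZR_le; lia).
  pose proof PI_RGT_0. pose proof PI_4.
  split; [apply Rdiv_lt_0_compat; lra|].
  apply (Rmult_le_reg_r (Nr g)); [lra|]. field_simplify; lra.
Qed.

Lemma side_arc_bounds : 0 < side_arc < PI.
Proof.
  pose proof (h_lt_beta h (beta g) half_step_bounds eq_refl).
  pose proof (beta_le_PI2 h (beta g) eq_refl). pose proof half_step_bounds. lra.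
Qed.

Lemma cos_beta_bounds : 0 <= cos (beta g) < 1.
Proof.
  pose proof (cos_beta_pos h (beta g) half_step_bounds eq_refl).
  pose proof (cos_beta_sqr h (beta g) half_step_bounds eq_refl).
  pose proof (sin_h_pos h half_step_bounds). nra.
Qed.

Lemma side_arc_oo j z : arc_oo (P g j) (Q g j) z ->
  exists t, 0 < t < side_arc /\ z = cis (Defs.phi g j - beta g + t).
Proof.
  rewrite Q_cis. apply arc_oo_cis. pose proof side_arc_bounds. pose proof PI_RGT_0. lra.
Qed.

Lemma T_arc_co_neg i u A1 :
  arc_oo (P g (rho g i + 1)) (Q g (rho g i + 1)) A1 ->
  arc_co A1 (Q g (rho g i + 1)) (T g i (cis (Defs.phi g i + u))) ->
  Mtrans_sin_sub (cos (beta g)) u (4 * h - beta g) < 0.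
Proof.
  intros HA1 Hco. pose proof side_arc_bounds. pose proof PI_RGT_0.
  destruct (side_arc_oo _ _ HA1) as (tA & HtA & ->).
  rewrite Q_cis in Hco.
  replace (Defs.phi g (rho g i + 1) - beta g + side_arc)
    with (Defs.phi g (rho g i + 1) - beta g + tA + (side_arc - tA)) in Hco by ring.
  apply arc_co_cis in Hco as (t & Ht & HT); [|lra].
  replace (rho g i + 1)%Z with (Defs.sigma g i + 2)%Z in HT by (unfold rho; ring).
  rewrite phi_add in HT.
  assert (HT' : T g i (cis (Defs.phi g i + u)) =
                cis (Defs.phi g (Defs.sigma g i) + (4 * h - beta g + (tA + t))))
    by (rewrite HT; f_equal; ring).
  apply (T_cis_sin_sub g i u _ (4 * h - beta g) cos_beta_bounds) in HT'.
  replace (4 * h - beta g + (tA + t) + PI - (4 * h - beta g)) with ((tA + t) + PI) in HT' by ring.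
  rewrite neg_sin in HT'.
  assert (0 < sin (tA + t)) by (apply sin_gt_0; lra).
  pose proof (Mden_pos _ u cos_beta_bounds). nra.
Qed.

Lemma T_arc_oc_pos i u A2 :
  arc_oo (P g (theta g (i - 1))) (Q g (theta g (i - 1))) A2 ->
  arc_oc (P g (theta g (i - 1))) A2 (T g (i - 1) (cis (Defs.phi g i + u))) ->
  0 < Mtrans_sin_sub (cos (beta g)) (u + 2 * h) (- (4 * h - beta g)).
Proof.
  intros HA2 Hoc. pose proof side_arc_bounds. pose proof PI_RGT_0.
  destruct (side_arc_oo _ _ HA2) as (tA & HtA & ->).
  unfold P in Hoc. apply arc_oc_cis in Hoc as (t & Ht & HT); [|lra].
  unfold theta in HT. rewrite phi_sub in HT.
  replace (Defs.phi g i + u) with (Defs.phi g (i - 1) + (u + 2 * h)) in HT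
    by (rewrite phi_sub; ring).
  assert (HT' : T g (i - 1) (cis (Defs.phi g (i - 1) + (u + 2 * h))) =
                cis (Defs.phi g (Defs.sigma g (i - 1)) + (t - 2 * h - beta g)))
    by (rewrite HT; f_equal; ring).
  apply (T_cis_sin_sub g (i - 1) _ _ (- (4 * h - beta g)) cos_beta_bounds) in HT'.
  replace (t - 2 * h - beta g + PI - - (4 * h - beta g)) with ((t - side_arc) + PI) in HT'
    by ring.
  rewrite neg_sin, <- sin_neg in HT'.
  assert (0 < sin (- (t - side_arc))) by (apply sin_gt_0; lra).
  pose proof (Mden_pos _ (u + 2 * h) cos_beta_bounds). nra.
Qed.

End Polygon.

Theorem lemma3p5 (g : nat) (A : Z -> C) (i : Z) (x : C) :
  (2 <= g)%nat ->
  (forall j : Z, A (j + NZ g)%Z = A j) ->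
  (forall j : Z, arc_oo (P g j) (Q g j) (A j)) ->
  arc_oo (P g i) (Q g i) x ->
  ~ (arc_co (A (rho g i + 1)%Z) (Q g (rho g i + 1)%Z) (T g i x) /\
     arc_oc (P g (theta g (i - 1))) (A (theta g (i - 1))) (T g (i - 1) x)).
Proof.
  intros Hg _ HA Hx [Hco Hoc].
  destruct (side_arc_oo g Hg i x Hx) as (tx & _ & ->).
  set (u := tx - beta g).
  replace (Defs.phi g i - beta g + tx) with (Defs.phi g i + u) in Hco, Hoc by (unfold u; ring).
  pose proof (T_arc_co_neg g Hg i u _ (HA _) Hco) as Hneg.
  pose proof (T_arc_oc_pos g Hg i u _ (HA _) Hoc) as Hpos.
  set (h := PI / Nr g) in *.
  pose proof (Mtrans_sin_sub_step_le h (beta g) (half_step_bounds g Hg) eq_refl (u + h)) as Hle.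
  replace (u + h + h) with (u + 2 * h) in Hle by ring.
  replace (u + h - h) with u in Hle by ring.
  lra.
Qed.
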